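(* Let $\mathcal{V}$ be a finite vocabulary, $N\ge1$, $\mathcal{S}$ a finite corpus of sequences in $\mathcal{V}^N$, and $q$ a language model on $\mathcal{V}^N$. Let $b\ge0$ and suppose $g:\bigcup_{j=1}^N\mathcal{V}^j\to[0,1]$ has generalized training advantage $\hat\beta(g)\ge b$. Define a distribution $q'$ through its conditional probabilities $$q'(x_j\mid x_1,\dots,x_{j-1})=q(x_j\mid x_1,\dots,x_{j-1})\,e^{-bg(x_1,\dots,x_j)}/Z_{q'}(x_1,\dots,x_{j-1}),$$ where $Z_{q'}(x_1,\dots,x_{j-1})=\sum_{\tilde{x}_j\in\mathcal{V}}q(\tilde{x}_j\mid x_1,\dots,x_{j-1})e^{-bg(x_1,\dots,x_{j-1},\tilde{x}_j)}$. Then $$\hat{L}(q';\mathcal{S})\le\hat{L}(q;\mathcal{S})-Nb^2/2.$$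
   Context: A language model $q$ on $\mathcal{V}^N$ is given by conditionals $q(x_j\mid x_1,\dots,x_{j-1})$, $j=1,\dots,N$ (for $j=1$ this is $q(x_1)$), with $q(x_1,\dots,x_N)=\prod_{j=1}^Nq(x_j\mid x_1,\dots,x_{j-1})$. The log-loss is $\hat{L}(q;\mathcal{S})=-\hat{\mathrm{E}}_{x\sim\mathcal{S}}[\log q(x)]$, where $\hat{\mathrm{E}}_{x\sim\mathcal{S}}$ is the empirical average over sequences in $\mathcal{S}$. The generalized training advantage of $g$ (with respect to $\mathcal{S}$ and $q$) is $$\hat{\beta}(g)=\frac{1}{N}\sum_{j=1}^{N}\hat{\mathrm{E}}_{x\sim\mathcal{S}}\Bigl[\mathrm{E}_{w\sim q(\cdot\mid x_1,\dots,x_{j-1})}g(x_1,\dots,x_{j-1},w)-g(x_1,\dots,x_j)\Bigr].$$ *)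

From HB Require Import structures.
From mathcomp Require Import all_boot all_order all_algebra.
From mathcomp Require Import all_classical all_reals.
From mathcomp.analysis Require Import ereal sequences exp.
Set Implicit Arguments. Unset Strict Implicit. Unset Printing Implicit Defensive.
Import Order.TTheory GRing.Theory Num.Theory.
Local Open Scope ring_scope.

(* A language model on V^N is represented by its conditionals
   q s v = q(v | s), where s : seq V is the prefix (x_1,...,x_{j-1}). *)

Definition is_lm (R : realType) (V : finType) (N : nat) (q : seq V -> V -> R) :=
  forall s : seq V, (size s < N)%N ->
    (forall v, 0 <= q s v) /\ \sum_(v : V) q s v = 1.

(* q(x) = prod_j q(x_j | x_1..x_{j-1}); index i : 'I_N is j-1. *)
Definition seqprob (R : realType) (V : finType) (N : nat)
  (q : seq V -> V -> R) (x : N.-tuple V) : R :=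
  \prod_(i < N) q (take i x) (tnth x i).

Definition neglog (R : realType) (p : R) : \bar R :=
  if 0 < p then (- ln p)%:E else +oo%E.

Definition logloss (R : realType) (V : finType) (N : nat)
  (q : seq V -> V -> R) (S : seq (N.-tuple V)) : \bar R :=
  ((\sum_(x <- S) neglog (seqprob q x)) * ((size S)%:R^-1)%:E)%E.

Definition advantage (R : realType) (V : finType) (N : nat)
  (q : seq V -> V -> R) (S : seq (N.-tuple V)) (g : seq V -> R) : R :=
  (N%:R)^-1 * ((\sum_(x <- S) \sum_(i < N)
     ((\sum_(w : V) q (take i x) w * g (rcons (take i x) w))
       - g (take i.+1 x))) / (size S)%:R).

Definition Zq (R : realType) (V : finType) (q : seq V -> V -> R)
  (g : seq V -> R) (b : R) (s : seq V) : R :=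
  \sum_(w : V) q s w * expR (- (b * g (rcons s w))).

Definition tilt (R : realType) (V : finType) (q : seq V -> V -> R)
  (g : seq V -> R) (b : R) : seq V -> V -> R :=
  fun s v => q s v * expR (- (b * g (rcons s v))) / Zq q g b s.

From HB Require Import structures.
From mathcomp Require Import all_boot all_order all_algebra.
From mathcomp Require Import all_classical all_reals.
From mathcomp.analysis Require Import ereal sequences exp derive topology normedtype.
From mathcomp Require Import ring lra.
Import Order.TTheory GRing.Theory Num.Theory.
Local Open Scope ring_scope.
Import numFieldNormedType.Exports.

(* Taking logarithms of the product defining q'(x) gives
     -log q'(x) = -log q(x) + sum_j (b g(x_1..x_j) + ln Z(x_1..x_{j-1})).
   Since b g lies in [0, b], exp(-b g) <= 1 - b g + b^2/2, hence
   Z <= 1 - b E_q[g] + b^2/2 and ln Z <= -b E_q[g] + b^2/2.  Summing over the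
   N positions and averaging over S, the loss changes by at most
   -b N beta(g) + N b^2/2 <= -N b^2/2. *)

Lemma expRN_le_quadratic {R : realType} (t : R) :
  0 <= t -> expR (- t) <= 1 - t + t ^+ 2 / 2.
Proof.
move=> t_ge0.
pose h := fun x : R => expR x * (1 - x + x ^+ 2 / 2).
(* h is nondecreasing: its derivative is expR x * x^2 / 2. *)
have h' x : is_derive x (1 : R) h (expR x * (x ^+ 2 / 2)).
  apply: is_derive_eq; rewrite !scaler0.
  rewrite -[LHS]/(expR x * ((0 + 1) * -1 + (0 + 2^-1 * (x * 1 + x * 1)))
                  + (1 - x + x ^+ 2 / 2) * expR x).
  by field.
have [|c _ h_incr] := MVT_segment t_ge0 (fun x _ => h' x).
  apply: continuous_subspaceT => x.
  have h'x := h' x.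
  by apply/differentiable_continuous/derivable1_diffP; exact: ex_derive.
have h0_le_ht : h 0 <= h t.
  by rewrite -subr_ge0 h_incr subr0 mulr_ge0 // mulr_ge0 ?expR_ge0 // divr_ge0 ?sqr_ge0.
move: h0_le_ht; rewrite /h expR0 mul1r expr0n /= subr0 mul0r addr0 => ht_ge1.
by rewrite expRN -(@ler_pM2l _ (expR t)) ?expR_gt0 // mulfV ?expR_eq0.
Qed.

Section ExpMoment.
Variables (R : realType) (V : finType) (p f : V -> R) (b : R).
Hypotheses (p_ge0 : forall v, 0 <= p v) (p_sum1 : \sum_v p v = 1).
Hypotheses (f01 : forall v, 0 <= f v <= 1) (b_ge0 : 0 <= b).

Lemma expR_moment_gt0 : 0 < \sum_v p v * expR (- (b * f v)).
Proof.
apply: (@lt_le_trans _ _ (\sum_v p v * expR (- b))).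
  by rewrite -big_distrl /= p_sum1 mul1r expR_gt0.
apply: ler_sum => v _; rewrite ler_wpM2l // ler_expR lerN2.
by have /andP[_ f1] := f01 v; rewrite ler_piMr.
Qed.

Lemma expR_moment_le :
  \sum_v p v * expR (- (b * f v)) <= 1 - b * \sum_v p v * f v + b ^+ 2 / 2.
Proof.
have term_le v :
    p v * expR (- (b * f v)) <= p v * (1 + b ^+ 2 / 2) - b * (p v * f v).
  have /andP[f0 f1] := f01 v.
  have bf_sqr_le : (b * f v) ^+ 2 <= b ^+ 2.
    by rewrite exprMn ler_piMr ?sqr_ge0 // expr_le1.
  have exp_le := expRN_le_quadratic _ (mulr_ge0 b_ge0 f0).
  rewrite (_ : _ - _ = p v * (1 - b * f v + b ^+ 2 / 2)); last by ring.
  rewrite ler_wpM2l //; apply: (le_trans exp_le).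
  by rewrite lerD2l ler_pM2r.
apply: (le_trans (ler_sum _ (fun v _ => term_le v))).
by rewrite sumrB -big_distrl -big_distrr /= p_sum1 mul1r; lra.
Qed.

Lemma ln_expR_moment_le :
  ln (\sum_v p v * expR (- (b * f v))) <= - (b * \sum_v p v * f v) + b ^+ 2 / 2.
Proof.
have := expR_ge1Dx (ln (\sum_v p v * expR (- (b * f v)))).
by rewrite lnK ?posrE ?expR_moment_gt0 //; have := expR_moment_le; lra.
Qed.

End ExpMoment.

Lemma neglogMexpR (R : realType) (p d : R) :
  neglog (p * expR (- d)) = (neglog p + d%:E)%E.
Proof.
rewrite /neglog pmulr_lgt0 ?expR_gt0 //; case: ifP => [p_gt0|_].
  by rewrite lnM ?posrE ?expR_gt0 // expRK opprD opprK.
by rewrite addye.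
Qed.

Lemma rcons_take_tnth {T : Type} {n : nat} (x : n.-tuple T) (i : 'I_n) :
  rcons (take i x) (tnth x i) = take i.+1 x.
Proof.
have x0 := tnth x i.
by rewrite (take_nth x0) ?size_tuple // (tnth_nth x0).
Qed.

Lemma size_take_ord {T : Type} {n : nat} (x : n.-tuple T) (i : 'I_n) :
  (size (take i x) < n)%N.
Proof. by rewrite size_take size_tuple ltn_ord. Qed.

Section TiltedModel.
Variables (R : realType) (V : finType) (N : nat).
Variables (q : seq V -> V -> R) (g : seq V -> R) (b : R).
Hypotheses (q_lm : is_lm N q) (b_ge0 : 0 <= b).
Hypothesis g01 : forall s : seq V, (0 < size s <= N)%N -> 0 <= g s <= 1.

Lemma g01_rcons s w : (size s < N)%N -> 0 <= g (rcons s w) <= 1.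
Proof. by move=> s_lt; apply: g01; rewrite size_rcons. Qed.

Lemma Zq_gt0 s : (size s < N)%N -> 0 < Zq q g b s.
Proof.
move=> s_lt; have [q_ge0 q_sum1] := q_lm _ s_lt.
by apply: expR_moment_gt0 => // w; apply: g01_rcons.
Qed.

Lemma ln_Zq_le s : (size s < N)%N ->
  ln (Zq q g b s) <= - (b * \sum_w q s w * g (rcons s w)) + b ^+ 2 / 2.
Proof.
move=> s_lt; have [q_ge0 q_sum1] := q_lm _ s_lt.
by apply: ln_expR_moment_le => // w; apply: g01_rcons.
Qed.

(* ln (q x / q' x), where q' = tilt q g b *)
Definition log_tilt_ratio (x : N.-tuple V) : R :=
  \sum_(i < N) (b * g (take i.+1 x) + ln (Zq q g b (take i x))).

Definition seq_advantage (x : N.-tuple V) : R :=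
  \sum_(i < N) (\sum_w q (take i x) w * g (rcons (take i x) w) - g (take i.+1 x)).

Lemma seqprob_tilt x :
  seqprob (tilt q g b) x = seqprob q x * expR (- log_tilt_ratio x).
Proof.
rewrite /seqprob /log_tilt_ratio -sumrN expR_sum -big_split /=.
apply: eq_bigr => i _.
rewrite /tilt rcons_take_tnth opprD expRD (expRN (ln _)) lnK ?mulrA //.
by rewrite posrE Zq_gt0 ?size_take_ord.
Qed.

Lemma log_tilt_ratio_le x :
  log_tilt_ratio x <= - (b * seq_advantage x) + N%:R * (b ^+ 2 / 2).
Proof.
rewrite /seq_advantage mulr_sumr -sumrN mulr_natl.
rewrite -[X in _ *+ X]card_ord -sumr_const.
rewrite -big_split /=; apply: ler_sum => i _.
have := ln_Zq_le _ (size_take_ord x i); lra.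
Qed.

Lemma logloss_tilt S : logloss (tilt q g b) S =
  (logloss q S + ((\sum_(x <- S) log_tilt_ratio x) / (size S)%:R)%:E)%E.
Proof.
rewrite /logloss.
have -> : (\sum_(x <- S) neglog (seqprob (tilt q g b) x) =
           \sum_(x <- S) neglog (seqprob q x) + (\sum_(x <- S) log_tilt_ratio x)%:E)%E.
  rewrite -sumEFin -big_split /=; apply: eq_bigr => x _.
  by rewrite seqprob_tilt neglogMexpR.
by rewrite muleDl ?fin_num_adde_defl // -EFinM.
Qed.

Lemma mean_log_tilt_ratio_le S : (0 < N)%N -> b <= advantage q S g ->
  (\sum_(x <- S) log_tilt_ratio x) / (size S)%:R <= - (N%:R * b ^+ 2 / 2).
Proof.
move=> N_gt0 b_le_adv.
set n : R := (size S)%:R; set A := \sum_(x <- S) seq_advantage x.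
have sum_le :
    \sum_(x <- S) log_tilt_ratio x <= - (b * A) + n * (N%:R * (b ^+ 2 / 2)).
  apply: (le_trans (ler_sum _ (fun x _ => log_tilt_ratio_le x))).
  rewrite big_split /= sumrN -mulr_sumr big_const_seq count_predT iter_addr_0.
  by rewrite -[_ *+ size S]mulr_natl.
have adv_ge : N%:R * b ^+ 2 <= b * (A / n).
  rewrite expr2 mulrCA ler_wpM2l //.
  by move: b_le_adv; rewrite /advantage ler_pdivlMl ?ltr0n.
have cancel_n (c : R) : 0 <= c -> n * c / n <= c.
  rewrite /n => c_ge0; have [->|S_gt0] := posnP (size S); first by rewrite !mul0r.
  by rewrite mulrC mulKf // pnatr_eq0 -lt0n.
have n_inv_ge0 : 0 <= n^-1 by rewrite invr_ge0 ler0n.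
have c_ge0 : 0 <= N%:R * (b ^+ 2 / 2) by rewrite mulr_ge0 ?divr_ge0 ?sqr_ge0.
have := ler_wpM2r n_inv_ge0 sum_le.
rewrite mulrDl mulNr -[b * A / n]mulrA.
have := cancel_n _ c_ge0; lra.
Qed.

End TiltedModel.

Theorem lemma3 (R : realType) (V : finType) (N : nat) (S : seq (N.-tuple V))
  (q : seq V -> V -> R) (g : seq V -> R) (b : R) :
  (0 < N)%N ->
  is_lm N q ->
  (forall s : seq V, (0 < size s <= N)%N -> 0 <= g s <= 1) ->
  0 <= b ->
  b <= advantage q S g ->
  (logloss (tilt q g b) S <= logloss q S - (N%:R * b ^+ 2 / 2)%:E)%E.
Proof.
move=> N_gt0 q_lm g01 b_ge0 b_le_adv.
rewrite logloss_tilt // -EFinN; apply: leeD => //; rewrite lee_fin.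
exact: mean_log_tilt_ratio_le.
Qed.
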